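(* Let $H=(U,(A_1,\dots,A_m))$ be a harmonic set system with $|U|<m(m-2)$ and $m\ge 51$. Then $H_{\{1,3,5\},\{7,9,11\}}=\emptyset$.
   Context: For $I_1,I_2\subseteq[m]$, $H_{I_1,I_2}=\bigcap_{i\in I_1}A_i\cap\bigcap_{i\in I_2}(U\setminus A_i)$ (empty intersection $=U$), $H_I=H_{I,\emptyset}$. The run decomposition of a finite set $I$ of positive integers is the partition of sizes, in nonincreasing order, of the maximal runs of consecutive integers in $I$. $H$ is harmonic if $|H_I|=|H_J|$ whenever $I,J\subseteq[m]$ have the same run decomposition. *)

From mathcomp Require Import all_boot.
Set Implicit Arguments. Unset Strict Implicit. Unset Printing Implicit Defensive.

(* A set system H = (U, (A_1,...,A_m)): the ground set U is the finite type U,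
   and A : nat -> {set U} gives A_i for i = 1..m (values at other i are irrelevant).
   Subsets of [m] = {1,...,m} are sets I : {set 'I_m.+1} with 0 \notin I. *)

Definition Hsys (U : finType) (m : nat) (A : nat -> {set U})
  (I1 I2 : {set 'I_m.+1}) : {set U} :=
  (\bigcap_(i in I1) A i) :&: (\bigcap_(i in I2) ~: A i).

Definition HI (U : finType) (m : nat) (A : nat -> {set U}) (I : {set 'I_m.+1})
  : {set U} := Hsys A I set0.

Fixpoint runs_from (last len : nat) (s : seq nat) : seq nat :=
  match s with
  | [::] => [:: len]
  | y :: t => if y == last.+1 then runs_from y len.+1 t
              else len :: runs_from y 1 t
  end.

Definition runs (s : seq nat) : seq nat :=
  match s with
  | [::] => [::]
  | x :: t => runs_from x 1 t
  end.

Definition run_decomp (n : nat) (I : {set 'I_n}) : seq nat :=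
  sort geq (runs (sort leq [seq val i | i in I])).

Definition subset_m (m : nat) (I : {set 'I_m.+1}) : bool := ord0 \notin I.

Definition harmonic (U : finType) (m : nat) (A : nat -> {set U}) : Prop :=
  forall I J : {set 'I_m.+1}, subset_m I -> subset_m J ->
    run_decomp I = run_decomp J -> #|HI A I| = #|HI A J|.

From mathcomp Require Import all_boot.
From mathcomp Require Import zify.

(* A set of odd indices has run decomposition (1, ..., 1), so in a harmonic
   system #|H_{P,Q}| depends only on #|P| and #|Q| when P and Q are disjoint
   sets of odd indices: this follows by induction on #|Q| from
   #|H_{P,Q}| = #|H_{P,Q-q}| - #|H_{P+q,Q-q}|.
   Let O be the set of odd indices in [m], so #|O| >= (m+1)/2. A point x of
   H_{{1,3,5},{7,9,11}} has an odd trace S = {i in O | x in A_i} with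
   3 <= #|S| <= #|O| - 3. Taking P = S and Q = O - S shows that every subset
   of O of size #|S| is the odd trace of some point, whence
   #|U| >= C(#|O|, #|S|) >= C(#|O|, 3) >= C((m+1)/2, 3) >= m(m-2). *)

Set Implicit Arguments.
Unset Strict Implicit.
Unset Printing Implicit Defensive.

Lemma runs_from_odd s l len : odd l -> all odd s ->
  runs_from l len s = len :: nseq (size s) 1.
Proof.
elim: s l len => [|y t IH] l len //= ol /andP[oy ot].
have -> : (y == l.+1) = false by apply: contraTF oy => /eqP->; rewrite /= ol.
by rewrite IH.
Qed.

Lemma runs_odd s : all odd s -> runs s = nseq (size s) 1.
Proof. by case: s => [|x t] //= /andP[ox ot]; rewrite runs_from_odd. Qed.

Lemma run_decomp_odd n (I : {set 'I_n}) :
  {in I, forall i : 'I_n, odd i} -> run_decomp I = sort geq (nseq #|I| 1).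
Proof.
move=> oddI; rewrite /run_decomp runs_odd.
  by rewrite size_sort size_image.
by rewrite all_sort; apply/allP => k /mapP[i]; rewrite mem_enum => /oddI oi ->.
Qed.

Definition odds m : {set 'I_m.+1} := [set i : 'I_m.+1 | odd i].

Lemma half_leq_card_odds m : m.+1./2 <= #|odds m|.
Proof.
pose f (j : 'I_m.+1./2) : 'I_m.+1 := inord j.*2.+1.
have f_le (j : 'I_m.+1./2) : j.*2.+1 <= m.
  by have := ltn_ord j; have := odd_double_half m.+1; lia.
have f_inj : injective f.
  move=> j1 j2 /(congr1 val); rewrite /= !inordK ?ltnS ?f_le //.
  by move/succn_inj/double_inj/val_inj.
rewrite -{1}(card_ord m.+1./2) -cardsT -(card_imset _ f_inj).
apply/subset_leq_card/subsetP => _ /imsetP[j _ ->].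
by rewrite inE inordK ?ltnS ?f_le //= odd_double.
Qed.

Lemma inord_odds m k : odd k -> k <= m -> inord k \in odds m.
Proof. by move=> ok km; rewrite inE inordK. Qed.

Lemma card_inord3 m a b c : a < b < c -> c <= m ->
  #|[set inord a; inord b; inord c] : {set 'I_m.+1}| = 3.
Proof.
move=> /andP[ab bc] cm.
have inj : {in [pred k | k <= m] &, injective (fun k => inord k : 'I_m.+1)}.
  by move=> i j im jm /(congr1 val); rewrite /= !inordK.
rewrite -setUA !cardsU1 cards1 !inE.
by rewrite !(inj_in_eq inj) ?inE; lia.
Qed.

Lemma leq_bin_succ n k : k.*2 < n -> 'C(n, k) <= 'C(n, k.+1).
Proof.
move=> lt2kn; rewrite -(leq_pmul2l (ltn0Sn k)) mul_bin_left leq_mul2r.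
by apply/orP; right; lia.
Qed.

Lemma leq_bin_half n j k : j <= k -> k.*2 <= n -> 'C(n, j) <= 'C(n, k).
Proof.
elim: k => [|k IH]; first by rewrite leqn0 => /eqP->.
rewrite leq_eqVlt => /orP[/eqP-> // | ltjk] le2kn.
by apply: leq_trans (IH ltjk _) (leq_bin_succ _); lia.
Qed.

Lemma leq_bin n j k : j <= k -> j + k <= n -> 'C(n, j) <= 'C(n, k).
Proof.
move=> lejk lejkn; have [le2kn | lt2nk] := leqP k.*2 n.
  exact: leq_bin_half.
rewrite -[in X in _ <= X]bin_sub; [apply: leq_bin_half | ]; lia.
Qed.

Lemma bin3E n : 'C(n, 3) * 6 = n * (n - 1) * (n - 2).
Proof.
rewrite (bin_ffact n 3) !ffactnS ffactn0.
by case: n => [|[|[|n]]] //=; lia.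
Qed.

Lemma leq_mul_bin3_half m : 51 <= m -> m * (m - 2) <= 'C(m.+1./2, 3).
Proof.
move=> m_ge51; rewrite -(leq_pmul2r (isT : 0 < 6)) bin3E.
have := odd_double_half m.+1; set K := m.+1./2 => defm.
have K_ge26 : 26 <= K by lia.
have -> : K = (K - 26) + 26 by lia.
by case: (odd m.+1) defm => /= defm; nia.
Qed.

Section HarmonicOddIndices.

Variables (U : finType) (m : nat) (A : nat -> {set U}).
Implicit Types (P Q S : {set 'I_m.+1}) (q : 'I_m.+1) (x : U).

Lemma Hsys_setU1l q P Q : Hsys A (q |: P) Q = Hsys A P Q :&: A q.
Proof.
rewrite /Hsys bigcap_setU big_set1; apply/setP => x.
by rewrite !inE; case: (x \in A q); rewrite ?andbT ?andbF.
Qed.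

Lemma Hsys_setU1r q P Q : Hsys A P (q |: Q) = Hsys A P Q :\: A q.
Proof.
rewrite /Hsys bigcap_setU big_set1; apply/setP => x.
by rewrite !inE; case: (x \in A q); rewrite ?andbT ?andbF.
Qed.

Lemma card_Hsys_split q P Q :
  #|Hsys A P Q| = #|Hsys A (q |: P) Q| + #|Hsys A P (q |: Q)|.
Proof. by rewrite Hsys_setU1l Hsys_setU1r cardsID. Qed.

Definition disjoint_odd P Q := (P :|: Q \subset odds m) && [disjoint P & Q].

Lemma disjoint_odd_D1 q P Q : disjoint_odd P Q -> disjoint_odd P (Q :\ q).
Proof.
case/andP=> sPQ dPQ; apply/andP; split.
  by apply: subset_trans sPQ; rewrite setUS ?subsetDl.
exact: disjointWr (subsetDl _ _) dPQ.
Qed.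

Lemma disjoint_odd_move q P Q :
  q \in Q -> disjoint_odd P Q -> disjoint_odd (q |: P) (Q :\ q).
Proof.
move=> qQ /andP[sPQ dPQ]; apply/andP; split.
  by rewrite -setUA setUCA setD1K ?setUA.
rewrite disjoints_subset subUset sub1set !inE eqxx /= -disjoints_subset.
exact: disjointWr (subsetDl _ _) dPQ.
Qed.

Lemma disjoint_odd_compl S : S \subset odds m -> disjoint_odd S (odds m :\: S).
Proof.
move=> sS; rewrite /disjoint_odd subUset sS subsetDl /=.
by rewrite disjoints_subset setDE setCI setCK subsetUr.
Qed.

Lemma in_Hsys x P Q : (x \in Hsys A P Q) =
  (P \subset [set i : 'I_m.+1 | x \in A i]) &&
  (Q \subset [set i : 'I_m.+1 | x \notin A i]).
Proof.
rewrite /Hsys inE; congr andb.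
  by apply/bigcapP/subsetP => memA i /memA; rewrite inE.
by apply/bigcapP/subsetP => memA i /memA; rewrite !inE.
Qed.

Definition odd_trace x : {set 'I_m.+1} := [set i in odds m | x \in A i].

Lemma odd_trace_sub x : odd_trace x \subset odds m.
Proof. by apply/subsetP => i; rewrite inE => /andP[]. Qed.

Lemma Hsys_odd_trace x : x \in Hsys A (odd_trace x) (odds m :\: odd_trace x).
Proof.
rewrite in_Hsys; apply/andP; split; apply/subsetP => i; rewrite !inE.
  by case/andP.
by case: (odd i); case: (x \in A i).
Qed.

Lemma odd_trace_Hsys x S : S \subset odds m ->
  x \in Hsys A S (odds m :\: S) -> odd_trace x = S.
Proof.
move=> /subsetP sS; rewrite in_Hsys => /andP[/subsetP inA /subsetP notinA].
apply/setP => i; rewrite inE; have [iS | iNS] := boolP (i \in S).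
  by rewrite sS //=; move/inA: iS; rewrite inE.
apply/andP => -[oi xAi].
by have := notinA i; rewrite in_setD iNS oi inE xAi => /(_ isT).
Qed.

Lemma Hsys_sub_odd_trace x P Q : P :|: Q \subset odds m -> x \in Hsys A P Q ->
  (P \subset odd_trace x) && (Q \subset odds m :\: odd_trace x).
Proof.
rewrite subUset in_Hsys => /andP[/subsetP sP /subsetP sQ].
move=> /andP[/subsetP inA /subsetP notinA].
apply/andP; split; apply/subsetP => i iPQ.
  by move: (sP i iPQ) (inA i iPQ); rewrite !inE => -> ->.
by move: (sQ i iPQ) (notinA i iPQ); rewrite !inE => -> /negbTE->.
Qed.

Hypothesis harmonicA : harmonic m A.

Lemma card_HI_odds P P' : P \subset odds m -> P' \subset odds m ->
  #|P| = #|P'| -> #|HI A P| = #|HI A P'|.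
Proof.
have oddP (R : {set 'I_m.+1}) : R \subset odds m -> {in R, forall i : 'I_m.+1, odd i}.
  by move=> sR i /(subsetP sR); rewrite inE.
have subset_mP (R : {set 'I_m.+1}) : R \subset odds m -> subset_m R.
  by move=> /oddP oR; apply/negP => /oR.
move=> sP sP' eP; apply: harmonicA; rewrite ?subset_mP //.
by rewrite !run_decomp_odd ?eP //; exact: oddP.
Qed.

Lemma card_Hsys_odd P Q P' Q' : disjoint_odd P Q -> disjoint_odd P' Q' ->
  #|P| = #|P'| -> #|Q| = #|Q'| -> #|Hsys A P Q| = #|Hsys A P' Q'|.
Proof.
move: {2}#|Q| (erefl #|Q|) => n.
elim: n P Q P' Q' => [|n IH] P Q P' Q' cQ oPQ oPQ' eP eQ'.
  have /eqP Q0 : Q == set0 by rewrite -cards_eq0 cQ.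
  have /eqP Q'0 : Q' == set0 by rewrite -cards_eq0 -eQ' cQ.
  move: oPQ oPQ'; rewrite Q0 Q'0 /disjoint_odd !setU0 => /andP[sP _] /andP[sP' _].
  exact: card_HI_odds.
have [q qQ] : exists q, q \in Q by apply/card_gt0P; rewrite cQ.
have [q' qQ'] : exists q', q' \in Q' by apply/card_gt0P; rewrite -eQ' cQ.
have cQq : #|Q :\ q| = n by move: cQ; rewrite (cardsD1 q) qQ => -[].
have cQq' : #|Q' :\ q'| = n by move: cQ; rewrite eQ' (cardsD1 q') qQ' => -[].
have qP : q \notin P by case/andP: oPQ => _ /disjointFl ->.
have qP' : q' \notin P' by case/andP: oPQ' => _ /disjointFl ->.
have splitQ := card_Hsys_split q P (Q :\ q).
have splitQ' := card_Hsys_split q' P' (Q' :\ q').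
rewrite setD1K // in splitQ; rewrite setD1K // in splitQ'.
have e_rest : #|Hsys A P (Q :\ q)| = #|Hsys A P' (Q' :\ q')|.
  by apply: IH; rewrite ?disjoint_odd_D1 ?cQq'.
have e_moved : #|Hsys A (q |: P) (Q :\ q)| = #|Hsys A (q' |: P') (Q' :\ q')|.
  by apply: IH; rewrite ?disjoint_odd_move ?cardsU1 ?qP ?qP' ?eP ?cQq'.
by apply/(@addnI #|Hsys A (q |: P) (Q :\ q)|); rewrite -splitQ e_moved -splitQ'.
Qed.

Lemma bin_odd_trace_leq_card x : 'C(#|odds m|, #|odd_trace x|) <= #|U|.
Proof.
rewrite -cards_draws -cardsT; apply: leq_trans (leq_imset_card odd_trace _).
apply/subset_leq_card/subsetP => S; rewrite inE => /andP[sS /eqP cS].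
have : 0 < #|Hsys A S (odds m :\: S)|.
  rewrite (card_Hsys_odd (disjoint_odd_compl sS)
             (disjoint_odd_compl (odd_trace_sub x)) cS); last first.
    by rewrite !cardsDS ?odd_trace_sub ?cS.
  by apply/card_gt0P; exists x; apply: Hsys_odd_trace.
case/card_gt0P => y /(odd_trace_Hsys sS) <-.
by rewrite imset_f ?inE.
Qed.

End HarmonicOddIndices.

Theorem proposition4p20 (U : finType) (m : nat) (A : nat -> {set U}) :
  harmonic m A -> #|U| < m * (m - 2) -> 51 <= m ->
  Hsys A ([set inord 1; inord 3; inord 5] : {set 'I_m.+1})
         [set inord 7; inord 9; inord 11] = set0.
Proof.
move=> harmonicA ltUm m_ge51; apply/setP => x; rewrite in_set0; apply/negP => xH.
have oddPQ : [set inord 1; inord 3; inord 5] :|: [set inord 7; inord 9; inord 11]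
               \subset odds m.
  by rewrite !subUset !sub1set !inord_odds //; lia.
have /andP[/subset_leq_card le3S /subset_leq_card le3Sc] :=
  Hsys_sub_odd_trace oddPQ xH.
rewrite card_inord3 // in le3S; last lia.
rewrite card_inord3 ?cardsDS ?odd_trace_sub // in le3Sc; last lia.
have := bin_odd_trace_leq_card harmonicA x.
have le3S_odds : 3 + #|odd_trace m A x| <= #|odds m| by lia.
have := leq_bin le3S le3S_odds.
have := leq_bin2l 3 (half_leq_card_odds m).
have := leq_mul_bin3_half m_ge51.
lia.
Qed.
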